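(* Let $\mathcal{C}\subseteq\mathbb{F}_q^n$ be a linear code of dimension $k\ge1$ and minimum distance $d\ge2$, and $J=n-k-d+2$. Let $\mathbf{h}_1,\dots,\mathbf{h}_m\in\mathcal{C}^\perp$ be linearly independent with $m>J$, and let $\mathcal{S}_j=\operatorname{supp}(\mathbf{h}_j)$. Assume $\mathcal{S}_1,\dots,\mathcal{S}_J$ are pairwise disjoint, let $\mathcal{U}=\mathcal{S}_1\cup\cdots\cup\mathcal{S}_J$ and $\theta=n-|\mathcal{U}|$, and assume $\theta\in[1,d-2]$. For $i\in[J+1,m]$ let $\theta_i=|\mathcal{S}_i\setminus\mathcal{U}|$ and assume $\theta_i\ge1$. Then for every $i\in[J+1,m]$ and every $l\in[1,J]$ with $|\mathcal{S}_l|>\theta_i$, $$|\mathcal{S}_i\cap\mathcal{S}_l|\ \ge\ |\mathcal{S}_l|-\theta_i+\theta-d+2 .$$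
   Context: $\operatorname{supp}(\mathbf{h})=\{l\in[1,n]:h_l\neq0\}$; $\mathcal{C}^\perp$ is the dual code; $[a,b]=\{a,\dots,b\}$. *)

From HB Require Import structures.
From mathcomp Require Import all_boot all_order all_algebra all_field.
Set Implicit Arguments. Unset Strict Implicit. Unset Printing Implicit Defensive.
Import GRing.Theory Num.Theory.
Local Open Scope ring_scope.

Section Codes.
Variables (F : finFieldType) (n : nat).

Definition supp (h : 'rV[F]_n) : {set 'I_n} := [set l | h 0 l != 0].

Definition wt (h : 'rV[F]_n) : nat := #|supp h|.

Definition dotv (u v : 'rV[F]_n) : F := \sum_(l < n) u 0 l * v 0 l.

Definition in_dual (C : {vspace 'rV[F]_n}) (h : 'rV[F]_n) : Prop :=
  forall c, c \in C -> dotv c h = 0.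

Definition is_min_dist (C : {vspace 'rV[F]_n}) (d : nat) : Prop :=
  (exists2 c, c \in C & (c != 0) && (wt c == d)) /\
  (forall c, c \in C -> c != 0 -> (d <= wt c)%N).

End Codes.

From HB Require Import structures.
From mathcomp Require Import all_boot all_order all_algebra all_field.
From mathcomp Require Import zify.
Set Implicit Arguments. Unset Strict Implicit. Unset Printing Implicit Defensive.
Import GRing.Theory Num.Theory.
Local Open Scope ring_scope.

(* If the inequality failed, the set T of coordinates outside U and S_l but
   also outside S_i would contain d - 1 coordinates. Exchanging h_l for h_i
   among h_1, ..., h_J gives J independent dual vectors that all vanish on T.
   Zeroing the coordinates in T is injective on C (a codeword supported in T
   has weight < d), and maps C into an (n - d + 1)-dimensional space, inside
   the kernel of these J vectors; hence k <= n - d + 1 - J = k - 1. *)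

Lemma exists_subset_card (T : finType) (A : {set T}) (k : nat) :
  (k <= #|A|)%N -> exists2 B : {set T}, B \subset A & #|B| = k.
Proof.
move/card_geqP => [s [us ss sA]].
exists [set x in s]; first by apply/subsetP => x; rewrite inE => /sA.
by rewrite cardsE -ss; apply/card_uniqP.
Qed.

Lemma card_ord_lt (m J : nat) : (J <= m)%N -> #|[set j : 'I_m | (j < J)%N]| = J.
Proof.
move=> leJm; have widen_inj : injective (widen_ord leJm).
  by move=> a b /(congr1 val) => /= /val_inj.
rewrite -[RHS]card_ord -(card_imset _ widen_inj); apply: eq_card => j.
rewrite inE; apply/idP/imsetP => [ltjJ|[a _ ->]]; last by rewrite /= ltn_ord.
by exists (Ordinal ltjJ) => //; apply: val_inj.
Qed.

Lemma leq_cardsCU_setD (T : finType) (U A B : {set T}) : A \subset U ->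
  (#|~: U| + #|A| <= #|(~: U :|: A) :\: B| + #|B :\: U| + #|B :&: A|)%N.
Proof.
move=> sAU; have disjUA : [disjoint ~: U & A].
  by rewrite disjoint_sym disjoints_subset setCK.
rewrite -cardsUI disjoint_setI0 // cards0 addn0 -(cardsID B) addnC -addnA leq_add2l.
apply: leq_trans (leq_card_setU _ _); apply: subset_leq_card; apply/subsetP => t.
by rewrite !inE; case: (t \in U); case: (t \in A); case: (t \in B).
Qed.

Lemma free_sub_family (K : fieldType) (vT : vectType K) (I : finType) (h : I -> vT)
  (S : {set I}) : free [seq h i | i <- enum I] -> free [seq h i | i in S].
Proof.
have /permPl/(perm_map h)/perm_free <- := perm_filterC (mem S) (enum I).
by rewrite map_cat enumT => /catl_free.
Qed.

Lemma row_free_of_free (K : fieldType) (n : nat) (X : seq 'rV[K]_n) :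
  free X -> row_free (\matrix_(a < size X) X`_a).
Proof.
move=> freeX; have /freeP freeXt : free (in_tuple X) by [].
apply/inj_row_free => v; rewrite mulmx_sum_row => v0; apply/rowP => a.
by rewrite mxE freeXt // -[RHS]v0; apply: eq_bigr => b _; rewrite rowK.
Qed.

Section Puncture.
Variables (F : fieldType) (n : nat) (T : {set 'I_n}).

Definition puncture : 'End('rV[F]_n) :=
  linfun (mulmxr (diag_mx (\row_t (t \notin T)%:R))).

Lemma puncture_coord x t : puncture x 0 t = if t \in T then 0 else x 0 t.
Proof.
by rewrite lfunE /= mul_mx_diag !mxE; case: (t \in T); rewrite ?mulr0 ?mulr1.
Qed.

Lemma dim_limg_puncture : (\dim (limg puncture) <= #|~: T|)%N.
Proof.
apply: (@leq_trans (\dim <<[seq delta_mx 0 t | t <- enum (~: T)]>>)).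
  apply: dimvS; apply/subvP => _ /memv_imgP [x _ ->].
  rewrite (row_sum_delta (puncture x)); apply: rpred_sum => t _.
  rewrite puncture_coord; case: ifPn => tT; first by rewrite scale0r rpred0.
  by rewrite rpredZ // memv_span // map_f // mem_enum inE.
by rewrite (leq_trans (dim_span _)) // size_map -cardE.
Qed.

End Puncture.
Arguments puncture {F n} T.

Section PunctureSupport.
Variables (F : finFieldType) (n : nat) (T : {set 'I_n}).

Lemma lker_puncture (x : 'rV[F]_n) : (x \in lker (puncture T)) = (supp x \subset T).
Proof.
rewrite memv_ker; apply/eqP/subsetP => [x0 t | sxT].
  rewrite inE; apply: contraR => tT.
  by have := puncture_coord T x t; rewrite x0 mxE (negbTE tT) => <-.
apply/rowP => t; rewrite puncture_coord mxE; case: ifPn => // tT.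
by apply/eqP; apply: contraNT tT => xt; apply: sxT; rewrite inE.
Qed.

Lemma dotv_puncture (g x : 'rV[F]_n) : [disjoint supp g & T] ->
  dotv (puncture T x) g = dotv x g.
Proof.
move=> gT; apply: eq_bigr => t _; rewrite puncture_coord.
case: ifPn => // tT; have /negbT := disjointFl gT tT.
by rewrite inE negbK mul0r => /eqP ->; rewrite mulr0.
Qed.

End PunctureSupport.

Lemma min_dist_supp_subset_eq0 (F : finFieldType) (n d : nat)
    (C : {vspace 'rV[F]_n}) (T : {set 'I_n}) (c : 'rV[F]_n) :
  is_min_dist C d -> (#|T| < d)%N -> c \in C -> supp c \subset T -> c = 0.
Proof.
move=> [_ light] ltTd cC /subset_leq_card; apply: contraTeq => c0.
by rewrite -ltnNge (leq_trans ltTd) ?light.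
Qed.

Lemma dim_code_free_dual_le (F : finFieldType) (n : nat) (C : {vspace 'rV[F]_n})
    (X : seq 'rV[F]_n) (T : {set 'I_n}) :
  free X -> {in X, forall g, in_dual C g} ->
  {in X, forall g, [disjoint supp g & T]} ->
  (forall c, c \in C -> supp c \subset T -> c = 0) ->
  (\dim C + size X + #|T| <= n)%N.
Proof.
move=> freeX dualX vanishX lightC.
pose H := \matrix_(a < size X) X`_a.
pose f : 'Hom('rV[F]_n, 'rV[F]_(size X)) := linfun (mulmxr H^T).
have fE x : f x = \row_a dotv x X`_a.
  by apply/rowP => a; rewrite lfunE !mxE; apply: eq_bigr => t _; rewrite !mxE.
have f_puncture : (f \o puncture T)%VF = f.
  apply/lfunP => x; rewrite comp_lfunE !fE; apply/rowP => a; rewrite !mxE.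
  by rewrite dotv_puncture // vanishX // mem_nth.
have dim_limg_f : \dim (limg f) = size X.
  have [B HB] := row_freeP (row_free_of_free freeX).
  suff -> : limg f = fullv by rewrite dimvf dim_matrix; exact: mul1n.
  apply/eqP; rewrite eqEsubv subvf /=; apply/subvP => y _.
  have -> : y = f (y *m B^T) by rewrite lfunE /= -mulmxA -trmx_mul HB trmx1 mulmx1.
  by rewrite memv_img ?memvf.
have C_punctured : (puncture T @: C <= limg (puncture T) :&: lker f)%VS.
  rewrite subv_cap limgS ?subvf //=; apply/subvP => _ /memv_imgP [c cC ->].
  rewrite memv_ker -comp_lfunE f_puncture fE; apply/eqP/rowP => a.
  by rewrite !mxE; apply: dualX; rewrite ?mem_nth.
have C_ker : (C :&: lker (puncture T))%VS = 0%VS.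
  apply/eqP; rewrite -subv0; apply/subvP => c; rewrite memv_cap lker_puncture.
  by case/andP => cC /(lightC c cC) ->; rewrite memv0.
rewrite -(limg_ker_dim (puncture T) C) C_ker dimv0 add0n.
have := limg_ker_dim f (limg (puncture T)).
rewrite -limg_comp f_puncture dim_limg_f.
have := dimvS C_punctured; have := dim_limg_puncture F T.
have := cardsC T; rewrite card_ord; lia.
Qed.

Theorem lemma5 (F : finFieldType) (n k d m : nat)
  (C : {vspace 'rV[F]_n}) (h : 'I_m -> 'rV[F]_n)
  (hk : (1 <= k)%N) (hdimC : \dim C = k)
  (hd2 : (2 <= d)%N) (hd : is_min_dist C d)
  (hdual : forall i, in_dual C (h i))
  (hfree : free [seq h i | i <- enum 'I_m])
  (hmJ : ((n + 2) - (k + d) < m)%N)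
  (hdisj : forall j1 j2 : 'I_m, (j1 < (n + 2) - (k + d))%N ->
             (j2 < (n + 2) - (k + d))%N -> j1 != j2 ->
             [disjoint supp (h j1) & supp (h j2)])
  (htheta : let U := \bigcup_(j : 'I_m | (j < (n + 2) - (k + d))%N) supp (h j) in
            (1 <= n - #|U|)%N && (n - #|U| <= d - 2)%N)
  (hthetai : forall i : 'I_m, ((n + 2) - (k + d) <= i)%N ->
             let U := \bigcup_(j : 'I_m | (j < (n + 2) - (k + d))%N) supp (h j) in
             (1 <= #|supp (h i) :\: U|)%N) :
  let J := ((n + 2) - (k + d))%N in
  let U := \bigcup_(j : 'I_m | (j < J)%N) supp (h j) in
  let theta := (n - #|U|)%N in
  forall i l : 'I_m, (J <= i)%N -> (l < J)%N ->
    let theta_i := #|supp (h i) :\: U| in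
    (theta_i < #|supp (h l)|)%N ->
    (#|supp (h l)|%:Z - theta_i%:Z + theta%:Z - d%:Z + 2 <=
       #|supp (h i) :&: supp (h l)|%:Z)%R.
Proof.
move=> J U theta i l leJi ltlJ theta_i ltthi; rewrite Order.TotalTheory.leNgt.
apply/negP => small_meet.
have sUj (j : 'I_m) : (j < J)%N -> supp (h j) \subset U.
  by move=> ltjJ; apply: (bigcup_sup j).
have [T sT cardT] : exists2 T : {set 'I_n},
    T \subset (~: U :|: supp (h l)) :\: supp (h i) & #|T| = (d - 1)%N.
  apply: exists_subset_card; have := leq_cardsCU_setD (supp (h i)) (sUj l ltlJ).
  by have := cardsC U; rewrite card_ord; move: small_meet; rewrite /theta /theta_i; lia.
set S := i |: ([set j : 'I_m | (j < J)%N] :\ l).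
have cardS : #|S| = J.
  have := cardsD1 l [set j : 'I_m | (j < J)%N]; rewrite card_ord_lt ?(ltnW hmJ) //.
  by rewrite cardsU1 !inE ltlJ ltnNge leJi andbF /=; lia.
have vanishS : {in [seq h j | j in S], forall g, [disjoint supp g & T]}.
  move=> _ /imageP [j jS ->]; case/setU1P: jS => [-> | /setD1P [njl]].
    by rewrite disjoint_sym disjoints_subset (subset_trans sT) ?subsetDr.
  rewrite inE => ltjJ; have sj : supp (h j) \subset ~: (~: U :|: supp (h l)).
    by rewrite setCU setCK subsetI sUj //= -disjoints_subset hdisj.
  by apply: disjointW sj (subset_trans sT (subsetDl _ _)) _; rewrite disjoints_subset.
have dualS : {in [seq h j | j in S], forall g, in_dual C g}.
  by move=> _ /imageP [j _ ->].
have lightC c : c \in C -> supp c \subset T -> c = 0.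
  by apply: min_dist_supp_subset_eq0 hd _; rewrite cardT; lia.
have := dim_code_free_dual_le (free_sub_family S hfree) dualS vanishS lightC.
by rewrite size_image cardS hdimC cardT /J; lia.
Qed.
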